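(* Let $k$ be a positive integer and let $\varepsilon>0$. Every finite graph $G$ with treewidth less than $k$ is a minor of some finite graph $\tilde G$ with growth $f_{\tilde G}(r)\leq (162(k+1)+\varepsilon)r+1$ for every positive integer $r$.
   Context: The growth of a finite graph $G$ is the function $f_G\colon\mathbb{N}\to\mathbb{N}$ where $f_G(r)$ is the maximum of $|V(H)|$ over all subgraphs $H$ of $G$ of radius at most $r$. Treewidth is the minimum, over tree-decompositions (bags indexed by the nodes of a tree, each edge contained in some bag, the bags containing any given vertex forming a non-empty subtree), of the maximum bag size minus $1$. A graph $H$ is a minor of $G$ if $H$ is isomorphic to a graph obtained from a subgraph of $G$ by contracting edges. *)

From HB Require Import structures.
From mathcomp Require Import all_boot all_order all_algebra.
From mathcomp Require Import reals.
Set Implicit Arguments. Unset Strict Implicit. Unset Printing Implicit Defensive.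
Import Order.TTheory GRing.Theory Num.Theory.

Record sgraph := SGraph {
  vert : finType;
  adj : rel vert;
  adj_sym : symmetric adj;
  adj_irr : irreflexive adj }.

Definition ball (T : finType) (F : {set T * T}) (c : T) (r : nat) : {set T} :=
  iter r (fun B => B :|: [set y | [exists x in B, (x, y) \in F]]) [set c].

(* S is the vertex set of a subgraph H of G (edge set F) of radius <= r:
   F is a symmetric set of edges of G with both ends in S, and some centre
   c in S reaches every vertex of S by an F-path of length <= r. *)
Definition radius_le_set (G : sgraph) (S : {set vert G}) (r : nat) : bool :=
  [exists F : {set vert G * vert G},
    [forall p in F, [&& p.1 \in S, p.2 \in S, adj p.1 p.2 & (p.2, p.1) \in F]]
    && [exists c in S, S \subset ball F c r]].

Definition growth (G : sgraph) (r : nat) : nat :=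
  \max_(S : {set vert G} | radius_le_set S r) #|S|.

Definition is_tree (I : finType) (t : rel I) : Prop :=
  [/\ symmetric t, irreflexive t, (0 < #|I|)%N,
      (forall i j : I, connect t i j) &
      (forall p : seq I, (3 <= size p)%N -> uniq p -> ~~ cycle t p)].

Definition is_tree_decomposition (G : sgraph) (I : finType) (t : rel I)
    (B : I -> {set vert G}) : Prop :=
  [/\ is_tree t,
      (forall x y : vert G, adj x y -> exists i, (x \in B i) && (y \in B i)) &
      (forall v : vert G,
         (exists i, v \in B i) /\
         (forall i j, v \in B i -> v \in B j ->
            connect [rel a b | [&& t a b, v \in B a & v \in B b]] i j))].

Definition td_width (G : sgraph) (I : finType) (B : I -> {set vert G}) : int :=
  ((\max_(i : I) #|B i|)%:Z - 1)%R.

Definition treewidth_lt (G : sgraph) (k : nat) : Prop :=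
  exists (I : finType) (t : rel I) (B : I -> {set vert G}),
    is_tree_decomposition t B /\ (td_width B < k%:Z)%R.

Definition is_minor (H G : sgraph) : Prop :=
  exists phi : vert H -> {set vert G},
    [/\ (forall v, phi v != set0),
        (forall v, forall x y, x \in phi v -> y \in phi v ->
           connect [rel a b | [&& adj a b, a \in phi v & b \in phi v]] x y),
        (forall u v, u != v -> [disjoint phi u & phi v]) &
        (forall u v, adj u v ->
           exists x y, [/\ x \in phi u, y \in phi v & adj x y])].

From HB Require Import structures.
From mathcomp Require Import all_boot all_order all_algebra.
From mathcomp Require Import reals.
From mathcomp Require Import zify lra.
Set Implicit Arguments. Unset Strict Implicit. Unset Printing Implicit Defensive.
Import Order.TTheory GRing.Theory Num.Theory.

(* Root the decomposition tree and replace each node i by a path, its spine, ending in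
   (i, 0); the end (c, 0) of the spine of a child c is joined to the spine of i at a
   position determined by an injective rank of c. Spines get longer with the height of
   the node and children are spaced further apart than the size of a whole child
   subtree, which makes every vertex of the resulting forest have at most 4s + 1
   descendants within distance s. A ball of radius r lies among the descendants within
   distance 2r of the r-th ancestor of its centre, hence has at most 8r + 1 vertices.
   Replacing every vertex by a clique of the size of the bags multiplies this by k, and
   G is a minor of the result: v is modelled by the copies, in layer "rank of v in the
   bag", of the spines of the bags containing v, connected through the spine ends. *)

Lemma leq_card_bigcup (T I : finType) (P : pred I) (A : I -> {set T}) :
  #|\bigcup_(i | P i) A i| <= \sum_(i | P i) #|A i|.
Proof.
elim/big_rec2: _ => [|i n U _ IH]; first by rewrite cards0.
by rewrite (leq_trans (leq_card_setU _ _).1) // leq_add2l.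
Qed.

Lemma connect_homo (T1 T2 : finType) (e1 : rel T1) (e2 : rel T2) (g : T1 -> T2) :
  (forall a b, e1 a b -> connect e2 (g a) (g b)) ->
  forall a b, connect e1 a b -> connect e2 (g a) (g b).
Proof.
move=> e12 a b /connectP [p + ->]; elim: p a => [|x p IH] a /=; first by rewrite connect0.
by case/andP=> /e12 e_ax /IH; apply: connect_trans.
Qed.

Lemma ball_step (T : finType) (F : {set T * T}) c n x y :
  x \in ball F c n -> (x, y) \in F -> y \in ball F c n.+1.
Proof.
by move=> x_in xy_in; rewrite /= !inE; apply/orP; right; apply/existsP; exists x; rewrite x_in.
Qed.

Section Descendants.
Variables (T : finType) (f : T -> T).

Definition desc (a : T) (s : nat) : {set T} :=
  [set y | [exists j : 'I_s.+1, iter j f y == a]].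

Lemma descP a s y : reflect (exists2 j, j <= s & iter j f y = a) (y \in desc a s).
Proof.
rewrite inE; apply: (iffP existsP) => [[j /eqP <-]|[j j_le <-]].
  by exists j => //; rewrite -ltnS.
by exists (Ordinal (j_le : j < s.+1)).
Qed.

Lemma desc_refl a s : a \in desc a s.
Proof. by apply/descP; exists 0. Qed.

Lemma descS a s y : (y \in desc a s.+1) = (y == a) || (f y \in desc a s).
Proof.
apply/descP/orP => [[[|j] j_le]|[/eqP ->|/descP [j j_le <-]]].
- by move=> /= ->; left.
- by rewrite iterSr => <-; right; apply/descP; exists j.
- by exists 0.
- by exists j.+1; rewrite ?iterSr.
Qed.

Lemma desc_neighbour a s x y :
  x \in desc a s -> [|| y == x, f x == y | f y == x] -> y \in desc (f a) s.+2.
Proof.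
case/descP=> j j_le <- /or3P [/eqP ->|/eqP <-|/eqP fy]; apply/descP.
- by exists j.+1 => //; lia.
- by exists j; [lia | rewrite -iterSr iterS].
- by exists j.+2; [lia | rewrite !iterSr fy -iterSr iterS].
Qed.

End Descendants.

Section RootedTree.
Variables (I : finType) (t : rel I) (rho : I).
Hypothesis t_sym : symmetric t.
Hypothesis t_irr : irreflexive t.
Hypothesis t_conn : forall i, connect t rho i.
Hypothesis t_acyclic : forall p : seq I, 3 <= size p -> uniq p -> ~~ cycle t p.

Let tE := [set p : I * I | t p.1 p.2].

Lemma ball_path x n p :
  x \in ball tE rho n -> path t x p -> last x p \in ball tE rho (n + size p).
Proof.
elim: p x n => [|y p IH] x n x_in /=; first by rewrite addn0.
case/andP=> xy p_path; rewrite addnS -addSn; apply: IH p_path.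
by apply: ball_step x_in _; rewrite inE.
Qed.

Lemma ball_exists i : exists n, i \in ball tE rho n.
Proof.
have /connectP [p p_path ->] := t_conn i.
by exists (0 + size p); apply: ball_path; rewrite //= inE.
Qed.

Definition depth i := ex_minn (ball_exists i).

Lemma depth_ball i : i \in ball tE rho (depth i).
Proof. by rewrite /depth; case: ex_minnP. Qed.

Lemma depth_min i n : i \in ball tE rho n -> depth i <= n.
Proof. by rewrite /depth; case: ex_minnP => m _ min_m /min_m. Qed.

Lemma depth_eq0 i : (depth i == 0) = (i == rho).
Proof.
apply/eqP/eqP => [d0|->]; last by apply/eqP; rewrite -leqn0 depth_min //= inE.
by have := depth_ball i; rewrite d0 /= inE => /eqP.
Qed.

Lemma depth_edge a b : t a b -> depth b <= (depth a).+1.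
Proof. by move=> ab; apply/depth_min/(ball_step (depth_ball a)); rewrite inE. Qed.

Lemma depth_pred_exists i d : depth i = d.+1 -> exists x, t x i && (depth x == d).
Proof.
move=> di; have := depth_ball i; rewrite di /= inE => /orP [/depth_min|].
  by rewrite di ltnn.
rewrite inE => /existsP [x /andP [x_in]]; rewrite inE /= => xi.
by exists x; rewrite xi /=; have := depth_min x_in; have := depth_edge xi; lia.
Qed.

Definition parent i :=
  if i == rho then rho else odflt i [pick x | t x i && (depth x == (depth i).-1)].

Lemma parent_root : parent rho = rho.
Proof. by rewrite /parent eqxx. Qed.

Lemma parentP i : i != rho -> t (parent i) i /\ (depth (parent i)).+1 = depth i.
Proof.
move=> i_rho; have di : 0 < depth i by rewrite lt0n depth_eq0.
rewrite /parent (negbTE i_rho); case: pickP => [x /andP [xi /eqP dx]|none] /=.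
  by rewrite dx prednK.
have [|x x_pred] := @depth_pred_exists i (depth i).-1; first by rewrite prednK.
by have := none x; rewrite x_pred.
Qed.

Lemma path_same_depth d u w : depth u = d -> depth w = d -> u != w ->
  exists s, [/\ uniq (u :: s), path t u s, last u s = w, 1 < size s &
                all (fun x => depth x <= d) s].
Proof.
elim: d u w => [|d IH] u w du dw uw.
  move/eqP: du dw uw; rewrite depth_eq0 => /eqP -> /eqP; rewrite depth_eq0 => /eqP ->.
  by rewrite eqxx.
have [u_rho w_rho] : u != rho /\ w != rho by rewrite -!depth_eq0 du dw.
have [tu dpu] := parentP u_rho; have [tw dpw] := parentP w_rho.
move: dpu dpw; rewrite du dw => /succn_inj dpu /succn_inj dpw.
have [pu_pw|pu_pw] := eqVneq (parent u) (parent w).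
  have [pu_u pu_w] : parent u != u /\ parent u != w.
    by split; apply/eqP => e; move: dpu; rewrite e ?du ?dw; lia.
  exists [:: parent u; w]; split => //=.
  - by rewrite !inE !negb_or andbT (eq_sym u) pu_u uw pu_w.
  - by rewrite t_sym tu pu_pw tw.
  - by rewrite dpu dw leqnSn leqnn.
have [s [s_uniq s_path s_last s_size s_depth]] := IH _ _ dpu dpw pu_pw.
have low x : x \in parent u :: s -> depth x <= d.
  by rewrite inE => /orP [/eqP ->|/(allP s_depth)]; rewrite ?dpu.
have [u_notin w_notin] : u \notin parent u :: s /\ w \notin parent u :: s.
  by split; apply/negP => /low; rewrite ?du ?dw ltnn.
exists (parent u :: rcons s w); split.
- by rewrite -!rcons_cons rcons_uniq inE negb_or eq_sym uw w_notin cons_uniq u_notin.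
- by rewrite /= t_sym tu rcons_path s_path s_last tw.
- by rewrite /= last_rcons.
- by rewrite /= size_rcons.
- by rewrite /= all_rcons dpu dw leqnSn leqnn; apply/allP => x /(allP s_depth); lia.
Qed.

Lemma edge_parent a b : t a b -> a = parent b \/ b = parent a.
Proof.
wlog le_ab : a b / depth a <= depth b.
  move=> wlog_ab ab; have [le|/ltnW le] := leqP (depth a) (depth b); first exact: wlog_ab.
  by rewrite t_sym in ab; case: (wlog_ab b a le ab); [right|left].
move=> ab; have [//|a_pb] := eqVneq a (parent b); first by left.
have [//|b_pa] := eqVneq b (parent a); first by right.
have [da_db|da_db] := eqVneq (depth a) (depth b).
  have a_b : a != b by apply: contraTneq ab => ->; rewrite t_irr.
  have [s [s_uniq s_path s_last s_size _]] := path_same_depth erefl (esym da_db) a_b.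
  have size3 : 3 <= size (a :: s) by rewrite /=; lia.
  have := t_acyclic size3 s_uniq.
  by rewrite /= rcons_path s_path s_last t_sym ab.
have db : depth b = (depth a).+1 by have := depth_edge ab; lia.
have b_rho : b != rho by rewrite -depth_eq0 db.
have [tb] := parentP b_rho; rewrite db => /succn_inj dpb.
have [s [s_uniq s_path s_last s_size s_depth]] := path_same_depth erefl dpb a_pb.
have b_notin : b \notin a :: s.
  apply/negP; rewrite inE => /orP [/eqP ba|/(allP s_depth)]; last by rewrite db ltnn.
  by move: db; rewrite ba; lia.
have size3 : 3 <= size (rcons (a :: s) b) by rewrite size_rcons /=; lia.
have := t_acyclic size3; rewrite rcons_uniq b_notin s_uniq /= !rcons_path last_rcons.
by rewrite s_path s_last tb t_sym ab => /(_ isT).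
Qed.

Definition level i := \max_j depth j - depth i.

Lemma level_parent c : c != rho -> level c < level (parent c).
Proof.
move=> c_rho; have [_ dpc] := parentP c_rho.
have : depth c <= \max_j depth j by apply: leq_bigmax.
rewrite /level -dpc; lia.
Qed.

Lemma parent_id c : (parent c == c) = (c == rho).
Proof.
apply/eqP/eqP => [pc|->]; last exact: parent_root.
by apply/eqP/negP => /negP /parentP [_]; rewrite pc; lia.
Qed.

End RootedTree.

Section SpineForest.
Variables (I : finType) (par : I -> I) (lev rk : I -> nat) (n : nat).
Hypothesis lev_par : forall c, par c != c -> lev c < lev (par c).
Hypothesis rk_inj : injective rk.
Hypothesis rk_lt : forall c, rk c < n.

Definition tail_len p := n.+1 * p.+1 + 1.
Definition head_len p := tail_len p + n * p.

(* [subtree_cap l] bounds the number of descendants of [(i, 0)] for every [i] of level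
   [< l]. The children of a node of level [l] hang [(subtree_cap l).+1] apart, beyond a
   head of length [head_len], which is half of [subtree_cap l.+1]: a search of depth
   [s <= head_len] from [(i, 0)] sees only [s.+1] vertices of the spine, and a deeper one
   sees at most [2 * head_len < 2 * s] vertices. *)
Fixpoint subtree_cap l := if l is l'.+1 then 2 * head_len (subtree_cap l') else 0.

Definition spine_len i :=
  head_len (subtree_cap (lev i)) + tail_len (subtree_cap (lev i)).
Definition attach c :=
  head_len (subtree_cap (lev (par c))) + (rk c).+1 * (subtree_cap (lev (par c))).+1.

Lemma subtree_cap_mono : {homo subtree_cap : l l' / l <= l'}.
Proof.
move=> l l'; elim: l' => [|l' IH]; first by rewrite leqn0 => /eqP ->.
rewrite leq_eqVlt ltnS => /orP [/eqP -> //|/IH le_l].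
apply: (leq_trans le_l) => /=; rewrite /head_len /tail_len; nia.
Qed.

Lemma attach_lt_spine c : attach c < spine_len (par c).
Proof. by rewrite /attach /spine_len /tail_len; have := rk_lt c; nia. Qed.

Lemma head_lt_attach c : head_len (subtree_cap (lev (par c))) < attach c.
Proof. rewrite /attach; nia. Qed.

Lemma spine_len_gt0 i : 0 < spine_len i.
Proof. by rewrite /spine_len /tail_len addn1 addnS. Qed.

Definition spine_max := (\max_i spine_len i).+1.
Definition hvert := (I * 'I_spine_max)%type.

Lemma spine_len_lt i : spine_len i < spine_max.
Proof. by rewrite ltnS; apply: leq_bigmax. Qed.

Definition on_spine (x : hvert) := x.2 < spine_len x.1.

(* The spine of [i] is the path [(i, 0), ..., (i, spine_len i - 1)] towards [(i, 0)], and
   [(i, 0)] is attached at position [attach i] of the spine of [par i]; all vertices not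
   [on_spine] are fixed, hence isolated. *)
Definition hpar (x : hvert) : hvert :=
  if ~~ on_spine x then x
  else if x.2 == 0 :> nat then (if par x.1 == x.1 then x else (par x.1, inord (attach x.1)))
  else (x.1, inord x.2.-1).

Lemma hparP y : hpar y != y ->
  (y.1 = (hpar y).1 /\ (y.2 : nat) = (hpar y).2.+1 /\ on_spine y) \/
  ((y.2 : nat) = 0 /\ par y.1 != y.1 /\
   (hpar y).1 = par y.1 /\ ((hpar y).2 : nat) = attach y.1).
Proof.
rewrite /hpar; case: ifPn => [_|/negbNE on_y]; first by rewrite eqxx.
case: ifPn => [/eqP y0|y0].
  case: ifPn => [_|p_y]; first by rewrite eqxx.
  by move=> _; right; rewrite /= inordK // (ltn_trans (attach_lt_spine _) (spine_len_lt _)).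
move=> _; left; rewrite /= inordK ?prednK ?lt0n //.
exact/ltnW/ltn_ord.
Qed.

Lemma hpar_on_spine y : on_spine y -> on_spine (hpar y).
Proof.
move=> on_y; have [->|/hparP] := eqVneq (hpar y) y; first by [].
rewrite /on_spine; case=> [[<- [y2 _]]|[_ [_ [-> ->]]]]; last exact: attach_lt_spine.
by move: on_y; rewrite /on_spine y2; lia.
Qed.

Lemma desc_off_spine a s : ~~ on_spine a -> desc hpar a s \subset [set a].
Proof.
move=> off_a; apply/subsetP => y /descP [j _ iter_y]; rewrite inE -iter_y.
have [on_y|off_y] := boolP (on_spine y).
  suff : on_spine (iter j hpar y) by rewrite iter_y (negbTE off_a).
  by elim: j {iter_y} => //= j IH; apply: hpar_on_spine.
have fix_y : hpar y = y by rewrite /hpar off_y.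
by elim: j {iter_y} => //= j /eqP <-; rewrite fix_y.
Qed.

Definition segment (a : hvert) s :=
  [set y : hvert | [&& y.1 == a.1, a.2 <= y.2 <= a.2 + s & on_spine y]].
Definition hung (a : hvert) s :=
  [set c | [&& par c != c, par c == a.1 & a.2 <= attach c < a.2 + s]].
Definition desc_cover (a : hvert) s := segment a s :|:
  \bigcup_(c in hung a s) desc hpar (c, ord0) (s - (attach c - a.2).+1).

Lemma hung_mono a s : hung a s \subset hung a s.+1.
Proof.
by apply/subsetP => c; rewrite !inE => /and3P [-> -> /andP [-> lt_c]]; rewrite addnS ltnW.
Qed.

Lemma desc_cover_hpar a s y : hpar y \in desc_cover a s -> y \in desc_cover a s.+1.
Proof.
case/setUP => [|/bigcupP [c c_hung y_desc]]; last first.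
  apply/setUP; right; apply/bigcupP; exists c; first exact: (subsetP (hung_mono a s)).
  move: c_hung; rewrite inE => /and3P [_ _ /andP [le_c lt_c]].
  have -> : s.+1 - (attach c - a.2).+1 = (s - (attach c - a.2).+1).+1 by lia.
  by rewrite descS y_desc orbT.
rewrite inE => /and3P [/eqP y_a /andP [le_y y_le] on_py].
have [fix_y|/hparP [[e1 [e2 on_y]]|[y0 [p_y [e1 e2]]]]] := eqVneq (hpar y) y.
- by rewrite -fix_y; apply/setUP; left; rewrite inE y_a eqxx le_y on_py addnS leqW.
- by apply/setUP; left; rewrite inE e1 y_a eqxx on_y e2 /=; lia.
apply/setUP; right; apply/bigcupP; exists y.1.
  by rewrite inE p_y -e1 y_a eqxx -e2 le_y /=; lia.
by rewrite [y]surjective_pairing (_ : y.2 = ord0) ?desc_refl //; apply: val_inj.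
Qed.

Lemma desc_sub_cover a s : on_spine a -> desc hpar a s \subset desc_cover a s.
Proof.
move=> on_a; have a_in s' : a \in desc_cover a s'.
  by apply/setUP; left; rewrite inE eqxx leqnn leq_addr on_a.
elim: s => [|s IH]; apply/subsetP => y.
  by case/descP=> j; rewrite leqn0 => /eqP -> /= ->; apply: a_in.
rewrite descS => /orP [/eqP ->|/(subsetP IH)]; [exact: a_in | exact: desc_cover_hpar].
Qed.

Lemma card_desc_on_spine a s : on_spine a -> #|desc hpar a s| <=
  #|segment a s| + \sum_(c in hung a s) #|desc hpar (c, ord0) (s - (attach c - a.2).+1)|.
Proof.
move=> /desc_sub_cover/subset_leq_card/leq_trans; apply.
by rewrite (leq_trans (leq_card_setU _ _).1) // leq_add2l leq_card_bigcup.
Qed.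

Lemma card_strip (A : {set hvert}) i lo hi :
  {in A, forall y : hvert, y.1 = i /\ lo <= y.2 < hi} -> #|A| <= hi - lo.
Proof.
move=> A_strip; pose strip := [set ((i, inord (lo + k)) : hvert) | k : 'I_(hi - lo)].
apply: (@leq_trans #|strip|); last by rewrite (leq_trans (leq_imset_card _ _)) ?card_ord.
apply/subset_leq_card/subsetP => -[y1 y2] /A_strip /= [-> /andP [le_y y_lt]].
have k_lt : y2 - lo < hi - lo by lia.
by apply/imsetP; exists (Ordinal k_lt); rewrite //= subnKC // inord_val.
Qed.

Lemma card_segment a s : #|segment a s| <= minn s.+1 (spine_len a.1).
Proof.
have seg y : y \in segment a s -> [/\ y.1 = a.1, a.2 <= y.2 <= a.2 + s & on_spine y].
  by rewrite inE => /and3P [/eqP].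
have le_s : #|segment a s| <= (a.2 + s).+1 - a.2.
  by apply: (card_strip (i := a.1)) => y /seg [-> /andP [-> ?] _].
have le_spine : #|segment a s| <= spine_len a.1 - 0.
  by apply: (card_strip (i := a.1)) => y /seg [y1 _]; rewrite /on_spine y1.
by rewrite leq_min; apply/andP; split; lia.
Qed.

Lemma card_vertices : #|I| <= n.
Proof.
have /leq_card : injective (fun c => Ordinal (rk_lt c)) by move=> c c' [] /rk_inj.
by rewrite card_ord.
Qed.

Lemma hung_lev a s c : c \in hung a s -> lev c < lev a.1.
Proof. by rewrite inE => /and3P [/lev_par + /eqP <- _]. Qed.

Lemma card_hung a s : #|hung a s| <= (s.-1 %/ (subtree_cap (lev a.1)).+1).+1.
Proof.
set g := (subtree_cap (lev a.1)).+1; set q := s.-1 %/ g.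
have hungE c : c \in hung a s ->
    attach c = head_len g.-1 + (rk c).+1 * g /\ a.2 <= attach c < a.2 + s.
  by rewrite inE => /and3P [_ /eqP pc ->]; rewrite /attach pc.
have lt_quot c c' : c \in hung a s -> c' \in hung a s -> rk c < rk c' ->
    (attach c - a.2) %/ g < (attach c' - a.2) %/ g.
  move=> /hungE [ac /andP [le_c _]] /hungE [ac' /andP [le_c' _]] lt_rk.
  have : attach c - a.2 + g <= attach c' - a.2 by move: le_c le_c'; rewrite ac ac'; nia.
  by move/(leq_div2r g); rewrite divnDr ?dvdnn // divnn /g addn1.
pose quot c : 'I_q.+1 := inord ((attach c - a.2) %/ g).
have quot_le c : c \in hung a s -> (attach c - a.2) %/ g <= q.
  by case/hungE=> _ /andP [le_c c_lt]; apply: leq_div2r; lia.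
rewrite -[q.+1]card_ord; apply: (@leq_card_in _ _ quot) => c c' c_in c'_in.
move/(congr1 val); rewrite /quot /= !inordK ?ltnS ?quot_le // => eq_quot.
apply: rk_inj; case: (ltngtP (rk c) (rk c')) => // lt_rk.
  by have := lt_quot _ _ c_in c'_in lt_rk; rewrite eq_quot ltnn.
by have := lt_quot _ _ c'_in c_in lt_rk; rewrite eq_quot ltnn.
Qed.

Lemma card_desc_root i s : #|desc hpar (i, ord0) s| <= subtree_cap (lev i).+1.
Proof.
suff bound l : forall i s, lev i = l -> #|desc hpar (i, ord0) s| <= subtree_cap l.+1.
  exact: bound.
elim/ltn_ind: l => l IH {}i {}s li.
have on_i : on_spine (i, ord0) by apply: spine_len_gt0.
rewrite (leq_trans (card_desc_on_spine s on_i)) //.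
set p := subtree_cap l; set children := \sum_(c in _) _.
have : children <= n * p.
  apply: (@leq_trans (#|hung (i, ord0) s| * p)).
    rewrite -sum_nat_const leq_sum // => c /hung_lev; rewrite /= li => lt_c.
    by rewrite (leq_trans (IH _ lt_c c _ erefl)) // subtree_cap_mono.
  by rewrite leq_mul2r (leq_trans (max_card _) card_vertices) orbT.
have := leq_trans (card_segment (i, ord0) s) (geq_minr _ _).
rewrite /spine_len /= li -/p /head_len; lia.
Qed.

Lemma card_desc_root_short i s : #|desc hpar (i, ord0) s| <= s.*2.+1.
Proof.
have [long|short] := ltnP (head_len (subtree_cap (lev i))) s.
  by rewrite (leq_trans (card_desc_root i s)) //=; lia.
have on_i : on_spine (i, ord0) by apply: spine_len_gt0.
have no_child : hung (i, ord0) s = set0.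
  apply/setP => c; rewrite !inE /=; apply/negbTE/negP => /and3P [_ /eqP pc lt_c].
  by have := head_lt_attach c; rewrite pc; lia.
rewrite (leq_trans (card_desc_on_spine s on_i)) // no_child big_set0 addn0.
by rewrite (leq_trans (card_segment _ _)) // (leq_trans (geq_minl _ _)) //; lia.
Qed.

Lemma desc_budget s p w :
  w <= (s.-1 %/ p.+1).+1 -> s.+1 + w * minn s.*2.-1 p <= 4 * s + 1.
Proof.
set q := s.-1 %/ p.+1 => le_w.
have le_q : q * p.+1 <= s.-1 by apply: leq_divM.
have le_s : w * minn s.*2.-1 p <= w * s.*2.-1 by rewrite leq_mul2l geq_minl orbT.
have le_p : w * minn s.*2.-1 p <= w * p by rewrite leq_mul2l geq_minr orbT.
case: q le_w le_q => [|q] le_w le_q.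
  have : w * s.*2.-1 <= s.*2.-1 by rewrite -[leqRHS]mul1n leq_mul2r le_w orbT.
  lia.
have : w * p <= q.+2 * p by rewrite leq_mul2r le_w orbT.
nia.
Qed.

Lemma card_desc a s : #|desc hpar a s| <= 4 * s + 1.
Proof.
have [on_a|off_a] := boolP (on_spine a); last first.
  by rewrite (leq_trans (subset_leq_card (desc_off_spine s off_a))) // cards1; lia.
rewrite (leq_trans (card_desc_on_spine s on_a)) //.
set p := subtree_cap (lev a.1).
apply: (@leq_trans (s.+1 + \sum_(c in hung a s) minn s.*2.-1 p)).
  rewrite leq_add ?(leq_trans (card_segment a s)) ?geq_minl // leq_sum // => c c_in.
  rewrite leq_min (leq_trans (card_desc_root_short _ _)) /=; last first.
    by move: c_in; rewrite inE => /and3P [_ _ /andP [le_c lt_c]]; lia.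
  by rewrite (leq_trans (card_desc_root _ _)) // subtree_cap_mono // (hung_lev c_in).
by rewrite sum_nat_const desc_budget // card_hung.
Qed.

End SpineForest.

Section Blowup.
Variables (T : finType) (f : T -> T) (k : nat).

(* The lexicographic product of the forest [x -- f x] with the complete graph [K_k]. *)
Definition blowup_adj : rel (T * 'I_k) := fun x y =>
  (x.1 != y.1) && ((f x.1 == y.1) || (f y.1 == x.1)) || (x.1 == y.1) && (x.2 != y.2).

Lemma blowup_adj_sym : symmetric blowup_adj.
Proof.
by move=> x y; rewrite /blowup_adj [y.1 == _]eq_sym [y.2 == _]eq_sym [(f y.1 == _) || _]orbC.
Qed.

Lemma blowup_adj_irr : irreflexive blowup_adj.
Proof. by move=> x; rewrite /blowup_adj !eqxx. Qed.

Definition blowup := SGraph blowup_adj_sym blowup_adj_irr.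

Lemma ball_sub_desc (F : {set (T * 'I_k) * (T * 'I_k)}) c r :
  {in F, forall p, blowup_adj p.1 p.2} ->
  ball F c r \subset setX (desc f (iter r f c.1) r.*2) setT.
Proof.
move=> F_adj; elim: r => [|r IH].
  apply/subsetP => -[y1 y2]; rewrite in_set1 => /eqP <- /=.
  by rewrite in_setX desc_refl in_setT.
apply/subsetP => -[y1 y2]; rewrite /= -/(ball F c r) in_setX in_setT andbT.
case/setUP => [/(subsetP IH)|].
  by rewrite in_setX in_setT andbT => /desc_neighbour; apply; rewrite eqxx.
rewrite in_set => /existsP [[x1 x2] /andP [/(subsetP IH) + /F_adj /= xy]].
rewrite in_setX in_setT andbT => /desc_neighbour; apply.
by move: xy; rewrite /blowup_adj /= => /orP [/andP [_ ->]|/andP [/eqP -> _]];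
  rewrite ?eqxx ?orbT.
Qed.

Lemma growth_blowup r D : (forall a, #|desc f a r.*2| <= D) -> growth blowup r <= D * k.
Proof.
move=> desc_le; apply/bigmax_leqP => S /existsP [F /andP [/forallP F_ok]].
move=> /existsP [c /andP [_ S_ball]].
have F_adj : {in F, forall p, blowup_adj p.1 p.2}.
  by move=> p p_in; have := F_ok p; rewrite p_in => /and4P [].
apply: leq_trans (subset_leq_card (subset_trans S_ball (ball_sub_desc c r F_adj))) _.
by rewrite cardsX cardsT card_ord leq_mul2r desc_le orbT.
Qed.

End Blowup.

Section DecompositionMinor.
Variables (G : sgraph) (I : finType) (t : rel I) (rho : I) (B : I -> {set vert G}) (k : nat).
Hypothesis t_sym : symmetric t.
Hypothesis t_irr : irreflexive t.
Hypothesis t_conn : forall i, connect t rho i.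
Hypothesis t_acyclic : forall p : seq I, 3 <= size p -> uniq p -> ~~ cycle t p.
Hypothesis B_edge : forall x y : vert G, adj x y -> exists i, (x \in B i) && (y \in B i).
Hypothesis B_cover : forall v : vert G, exists i, v \in B i.
Hypothesis B_conn : forall (v : vert G) i j, v \in B i -> v \in B j ->
  connect [rel a b | [&& t a b, v \in B a & v \in B b]] i j.
Hypothesis B_size : forall i, #|B i| <= k.+1.

Let par := parent t_conn.
Let lev := level t_conn.
Let rk (c : I) : nat := enum_rank c.
Let V := hvert lev #|I|.
Let f : V -> V := @hpar _ par lev rk #|I|.

Let lev_par c : par c != c -> lev c < lev (par c).
Proof. by rewrite parent_id; apply: level_parent. Qed.

Let rk_inj : injective rk.
Proof. by move=> c c' /val_inj /enum_rank_inj. Qed.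

Let rk_lt c : rk c < #|I|.
Proof. exact: ltn_ord. Qed.

Definition host := blowup f k.+1.

Definition bag_rank i v : 'I_k.+1 := inord (index v (enum (B i))).

Lemma bag_rank_inj i : {in B i &, injective (bag_rank i)}.
Proof.
move=> u v u_in v_in /(congr1 val); rewrite /bag_rank /= !inordK; last first.
- by rewrite (leq_trans _ (B_size i)) // cardE index_mem mem_enum.
- by rewrite (leq_trans _ (B_size i)) // cardE index_mem mem_enum.
by move/(congr1 (nth u (enum (B i)))); rewrite !nth_index ?mem_enum.
Qed.

Definition branch v : {set V * 'I_k.+1} :=
  [set x | [exists i, [&& v \in B i, x.1.1 == i, on_spine x.1 & x.2 == bag_rank i v]]].

Definition spine_root v i : V * 'I_k.+1 := ((i, ord0), bag_rank i v).

Let branch_adj v := [rel x y | [&& blowup_adj f x y, x \in branch v & y \in branch v]].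

Lemma mem_branch v i (m : 'I_(spine_max lev #|I|)) :
  v \in B i -> m < spine_len lev #|I| i -> ((i, m), bag_rank i v) \in branch v.
Proof.
by move=> v_in m_lt; rewrite inE; apply/existsP; exists i; rewrite /on_spine v_in eqxx m_lt eqxx.
Qed.

Lemma spine_root_in v i : v \in B i -> spine_root v i \in branch v.
Proof. by move=> v_in; apply: mem_branch => //; apply: spine_len_gt0. Qed.

Lemma spine_connect v i m : v \in B i -> m < spine_len lev #|I| i ->
  connect (branch_adj v) ((i, inord m), bag_rank i v) (spine_root v i).
Proof.
move=> v_in; elim: m => [|m IH] m_lt.
  by rewrite (_ : inord 0 = ord0) //; apply: val_inj; rewrite /= inordK.
have lt_max : m.+1 < spine_max lev #|I| := ltn_trans m_lt (spine_len_lt _ _ _).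
have inordS : (inord m.+1 : 'I_(spine_max lev #|I|)) = m.+1 :> nat := inordK lt_max.
have inord_m : (inord m : 'I_(spine_max lev #|I|)) = m :> nat := inordK (ltnW lt_max).
have f_step : f (i, inord m.+1) = (i, inord m) by rewrite /f /hpar /on_spine /= inordS m_lt.
have neq : (i, inord m.+1) != (i, inord m) :> V.
  by apply/eqP => -[] /(congr1 val) /=; rewrite inordS inord_m; lia.
have in1 : ((i, inord m.+1), bag_rank i v) \in branch v.
  by apply: mem_branch; rewrite ?inordS.
have in0 : ((i, inord m), bag_rank i v) \in branch v.
  by apply: mem_branch; rewrite ?inord_m // ltnW.
apply: connect_trans (IH (ltnW m_lt)); apply: connect1.
by rewrite /= in1 in0 /blowup_adj /= f_step neq !eqxx.
Qed.

Lemma branch_adj_connect_sym v : connect_sym (branch_adj v).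
Proof.
by apply: sym_connect_sym => x y; rewrite /= blowup_adj_sym [(y \in _) && _]andbC.
Qed.

Lemma parent_connect v b : par b != b -> v \in B (par b) -> v \in B b ->
  connect (branch_adj v) (spine_root v b) (spine_root v (par b)).
Proof.
move=> pb v_pb v_b; have att_lt := @attach_lt_spine _ par lev rk _ rk_lt b.
have att_max := ltn_trans att_lt (spine_len_lt _ _ _).
apply: connect_trans (spine_connect v_pb att_lt); apply: connect1.
have f_b : f (b, ord0) = (par b, inord (attach par lev rk #|I| b)).
  by rewrite /f /hpar /on_spine /= (negbTE pb).
have neq : (b, ord0) != (par b, inord (attach par lev rk #|I| b)) :> V.
  by apply/eqP => -[b_pb _]; rewrite -b_pb eqxx in pb.
by rewrite /= spine_root_in // mem_branch ?inordK // /blowup_adj /= f_b neq !eqxx.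
Qed.

Lemma edge_connect v a b : t a b -> v \in B a -> v \in B b ->
  connect (branch_adj v) (spine_root v a) (spine_root v b).
Proof.
move=> ab v_a v_b; have := edge_parent t_sym t_irr t_conn t_acyclic ab; rewrite -/par.
case=> [a_pb|b_pa]; [subst a; rewrite branch_adj_connect_sym | subst b].
all: apply: parent_connect => //.
all: by apply: contraTneq ab => ->; rewrite t_irr.
Qed.

Lemma branch_spine_root v x :
  x \in branch v -> exists2 i, v \in B i & connect (branch_adj v) x (spine_root v i).
Proof.
rewrite inE => /existsP [i /and4P [v_i /eqP x1 on_x /eqP x2]]; exists i => //.
case: x x1 on_x x2 => [[_ m] r] /= -> on_x ->.
by rewrite -[m]inord_val; apply: spine_connect.
Qed.

Lemma branch_connect v x y : x \in branch v -> y \in branch v -> connect (branch_adj v) x y.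
Proof.
move=> /branch_spine_root [i v_i x_i] /branch_spine_root [j v_j y_j].
apply: connect_trans x_i _; rewrite branch_adj_connect_sym; apply: connect_trans y_j _.
rewrite branch_adj_connect_sym; apply: (connect_homo (g := spine_root v) _ (B_conn v_i v_j)).
by move=> a b /and3P [ab v_a v_b]; apply: edge_connect.
Qed.

Lemma minor_host : is_minor G host.
Proof.
exists branch; split.
- move=> v; have [i v_i] := B_cover v.
  by apply/set0Pn; exists (spine_root v i); apply: spine_root_in.
- exact: branch_connect.
- move=> u v uv; rewrite -setI_eq0; apply/eqP/setP => x; rewrite !inE.
  apply/negP => /andP [/existsP [i /and4P [u_i /eqP xi _ /eqP xu]]].
  move=> /existsP [j /and4P [v_j /eqP xj _ /eqP xv]]; move: xj; rewrite xi => ij; subst j.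
  by move: uv; rewrite (bag_rank_inj u_i v_j) ?eqxx // -xu -xv.
- move=> u v uv; have [i /andP [u_i v_i]] := B_edge uv.
  exists (spine_root u i), (spine_root v i); split; try exact: spine_root_in.
  rewrite /= /blowup_adj /= eqxx /=; apply: contraTneq uv => /(bag_rank_inj u_i v_i) ->.
  by rewrite (adj_irr (s := G)).
Qed.

Lemma growth_host r : growth host r <= (4 * r.*2 + 1) * k.+1.
Proof. by apply: growth_blowup => a; apply: card_desc. Qed.

End DecompositionMinor.

Theorem corollary18 (R : realType) (k : nat) (eps : R) :
  (0 < k)%N -> (0 < eps)%R ->
  forall G : sgraph, treewidth_lt G k ->
  exists Gt : sgraph, is_minor G Gt /\
    (forall r : nat, (0 < r)%N ->
       ((growth Gt r)%:R <= (162 * (k.+1)%:R + eps) * r%:R + 1 :> R)%R).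
Proof.
case: k => [//|k] _ eps_gt0 G [I [t [B [[tree_t B_edge B_sub] width_lt]]]].
case: tree_t => t_sym t_irr I_gt0 t_conn t_acyclic; have [rho _] := card_gt0P I_gt0.
have B_size i : #|B i| <= k.+1.
  apply: leq_trans (leq_bigmax (F := fun i => #|B i|) i) _.
  by move: width_lt; rewrite /td_width; lia.
exists (host k (t_conn rho)); split.
  by apply: minor_host B_size => // v; have [] := B_sub v.
move=> r r_gt0; have : growth (host k (t_conn rho)) r <= 162 * k.+2 * r.
  by rewrite (leq_trans (growth_host _ _ r)) //; nia.
rewrite -(ler_nat R) !natrM => growth_le.
apply: (le_trans growth_le).
have : (0 <= eps * r%:R)%R by rewrite mulr_ge0 // ltW.
lra.
Qed.
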